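(* Let $G$ be an antimatroid on a ground set $S$ with $|S|=n$, with Tutte polynomial $T(G;x,y)=\sum_{i,j}b_{i,j}x^iy^j$. For $i\ge0$ let $a_{i,1}$ be the number of convex sets with $i$ elements and exactly one interior point, and for $p\in S$ let $\mathcal{C}_p$ be the collection of convex sets $C$ with $\mathrm{int}(C)=\{p\}$. Then $$b_{0,1}=\sum_{i=0}^{n}(-1)^ia_{i,1}=\sum_{p\in\mathrm{int}(S)}\ \sum_{C\in\mathcal{C}_p}(-1)^{|C|}.$$
   Context: An antimatroid on a finite set $S$ is a family $\mathcal{F}\subseteq 2^S$ of feasible sets with $\emptyset\in\mathcal{F}$, $S\in\mathcal{F}$, closed under union, and accessible: every nonempty $F\in\mathcal{F}$ contains some $x$ with $F\setminus\{x\}\in\mathcal{F}$. Its rank function is $r(A)=\max\{|F|:F\in\mathcal{F},F\subseteq A\}$, and its Tutte polynomial is $T(G;x,y)=\sum_{A\subseteq S}(x-1)^{r(S)-r(A)}(y-1)^{|A|-r(A)}$. A set $C$ is convex if $S\setminus C\in\mathcal{F}$; the convex closure $\overline{A}$ of $A$ is the smallest convex set containing $A$. For convex $C$, $p\in C$ is extreme if $p\notin\overline{C\setminus\{p\}}$; $\mathrm{int}(C)$ is the set of non-extreme points of $C$ (in particular $\mathrm{int}(S)$ is the set of non-extreme points of $S$). *)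

From HB Require Import structures.
From mathcomp Require Import all_boot all_order all_algebra.
Set Implicit Arguments. Unset Strict Implicit. Unset Printing Implicit Defensive.
Import Order.TTheory GRing.Theory Num.Theory.
Local Open Scope ring_scope.

(* The ground set S is the whole finite type T; feasible sets form F. *)
Definition is_antimatroid (T : finType) (F : {set {set T}}) : Prop :=
  [/\ set0 \in F, [set: T] \in F,
      (forall A B, A \in F -> B \in F -> A :|: B \in F) &
      (forall A, A \in F -> A != set0 -> exists2 x, x \in A & A :\ x \in F)].

Definition arank (T : finType) (F : {set {set T}}) (A : {set T}) : nat :=
  \max_(B in F | B \subset A) #|B|.

(* Tutte polynomial as a polynomial in x with coefficients polynomials in y:
   T(G;x,y) = sum_A (x-1)^(r(S)-r(A)) (y-1)^(|A|-r(A)). *)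
Definition tutte (T : finType) (F : {set {set T}}) : {poly {poly int}} :=
  \sum_(A : {set T})
     ('X - 1) ^+ (arank F [set: T] - arank F A)%N
     * ((('X - 1) ^+ (#|A| - arank F A)%N) %:P).

Definition tutte_coef (T : finType) (F : {set {set T}}) (i j : nat) : int :=
  ((tutte F)`_i)`_j.

Definition convex (T : finType) (F : {set {set T}}) (C : {set T}) : bool :=
  ~: C \in F.

Definition cclosure (T : finType) (F : {set {set T}}) (A : {set T}) : {set T} :=
  \bigcap_(C | convex F C && (A \subset C)) C.

Definition interior (T : finType) (F : {set {set T}}) (C : {set T}) : {set T} :=
  [set p in C | p \in cclosure F (C :\ p)].

From mathcomp Require Import all_boot all_order all_algebra.
From mathcomp Require Import zify.
Set Implicit Arguments. Unset Strict Implicit. Unset Printing Implicit Defensive.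
Import Order.TTheory GRing.Theory Num.Theory.
Local Open Scope ring_scope.

(* The rank of a set A is the size of the complement of the convex closure of
   its complement, so writing A = S \ D turns the Tutte sum into a sum over D
   of (x-1)^|cl D| (y-1)^(|cl D|-|D|).  The augmentation property shows that
   cl D = C for a convex C exactly when C \ int C <= D <= C, so grouping the D
   by their closure C gives the expansion T(G;x,y) = sum_C (x-1)^|C| y^|int C|.
   Setting x = 0 and reading off y^1, b_{0,1} is the signed count of convex
   sets with exactly one interior point; sorting those by size gives the first
   identity, and by their interior point (which is interior in S) the second. *)

Lemma sum_expr_card_by_size (U : finType) (R : pzSemiRingType)
    (A : {set {set U}}) (a : R) (n : nat) :
  {in A, forall C : {set U}, #|C| <= n}%N ->
  \sum_(C in A) a ^+ #|C| = \sum_(0 <= i < n.+1) a ^+ i * #|[set C in A | #|C| == i]|%:R.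
Proof.
move=> leA; rewrite big_mkord.
rewrite [LHS](partition_big (fun C : {set U} => (inord #|C| : 'I_n.+1)) xpredT) //=.
apply: eq_bigr => i _; rewrite -sum1_card natr_sum mulr_sumr.
apply/esym/eq_big => [C | C]; last by rewrite inE => /andP[_ /eqP ->]; rewrite mulr1.
rewrite inE; case: (boolP (C \in A)) => //= CA.
by rewrite -val_eqE /= inordK // ltnS leA.
Qed.

Lemma sum_expr_card_subset (U : finType) (R : comPzSemiRingType) (I : {set U}) (a : R) :
  \sum_(J : {set U} | J \subset I) a ^+ #|J| = (a + 1) ^+ #|I|.
Proof.
rewrite (eq_bigl (fun J => J \in powerset I)); last by move=> J; rewrite powersetE.
rewrite (@sum_expr_card_by_size _ _ _ _ #|I|); last first.
  by move=> J; rewrite powersetE => /subset_leq_card.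
rewrite exprD1n big_mkord; apply: eq_bigr => i _.
rewrite -cards_draws mulr_natr; congr (_ *+ _).
by apply: eq_card => J; rewrite !inE.
Qed.

Lemma sum_expr_card_interval (U : finType) (R : comPzSemiRingType) (C I : {set U}) (a : R) :
  I \subset C ->
  \sum_(D : {set U} | (C :\: I \subset D) && (D \subset C)) a ^+ (#|C| - #|D|)
  = (a + 1) ^+ #|I|.
Proof.
move=> sIC; rewrite -sum_expr_card_subset.
have setDDK D : C :\: (C :\: D) = C :&: D by rewrite setDDr setDv set0U.
rewrite (reindex_onto (fun J => C :\: J) (fun D => C :\: D)) /=; last first.
  by move=> D /andP[_ sDC]; rewrite setDDK (setIidPr sDC).
apply: eq_big => [J | J /andP[_ /eqP eJ]].
  rewrite subsetDl andbT setDDK; apply/andP/idP => [[sD /eqP eJ] | sJI].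
    by have := setDS C sD; rewrite !setDDK (setIidPr sIC) eJ.
  by split; [rewrite setDS | apply/eqP/setIidPr/(subset_trans sJI)].
have sJC : J \subset C by rewrite -eJ subsetDl.
by rewrite cardsDS // subKn // subset_leq_card.
Qed.

Section Antimatroid.
Variables (T : finType) (F : {set {set T}}).
Hypothesis antiF : is_antimatroid F.

Lemma convex_cclosure (A : {set T}) : convex F (cclosure F A).
Proof.
have [F0 _ FU _] := antiF.
rewrite /convex /cclosure setC_bigcap.
by apply: (big_ind (fun X => X \in F)) => // C /andP[].
Qed.

Lemma sub_cclosure (A : {set T}) : A \subset cclosure F A.
Proof. by apply/bigcapsP => C /andP[]. Qed.

Lemma cclosure_sub (A C : {set T}) : convex F C -> A \subset C -> cclosure F A \subset C.
Proof. by move=> cC sAC; apply: bigcap_inf; rewrite cC sAC. Qed.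

Lemma cclosureS (A B : {set T}) : A \subset B -> cclosure F A \subset cclosure F B.
Proof.
move=> sAB; apply: cclosure_sub; first exact: convex_cclosure.
exact: subset_trans sAB (sub_cclosure B).
Qed.

Lemma cclosure_id (C : {set T}) : convex F C -> cclosure F C = C.
Proof. by move=> cC; apply/eqP; rewrite eqEsubset cclosure_sub // sub_cclosure. Qed.

Lemma cclosure0 : cclosure F set0 = set0.
Proof. by have [_ FT _ _] := antiF; rewrite cclosure_id // /convex setC0. Qed.

Lemma arankE (A : {set T}) : arank F A = #|~: cclosure F (~: A)|.
Proof.
apply/eqP; rewrite eqn_leq; apply/andP; split.
  apply/bigmax_leqP => B /andP[BF sBA]; apply: subset_leq_card.
  rewrite -(setCK B) setCS cclosure_sub ?setCS //.
  by rewrite /convex setCK.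
apply: leq_bigmax_cond; rewrite (convex_cclosure (~: A) : _ \in F) /=.
by rewrite -setCS setCK sub_cclosure.
Qed.

Lemma feasible_augment (A B : {set T}) : A \in F -> B \in F -> ~~ (B \subset A) ->
  exists2 x, x \in B :\: A & x |: A \in F.
Proof.
have [_ _ FU Facc] := antiF.
move=> AF; elim: {B}_.+1 {-2}B (ltnSn #|B|) => // n IHn B leBn BF nsBA.
have [y yB By] : exists2 y, y \in B & B :\ y \in F.
  by apply: Facc => //; apply: contraNneq nsBA => ->; rewrite sub0set.
have [sBA | nsBA'] := boolP (B :\ y \subset A); last first.
  have [|x] := IHn _ _ By nsBA'; first by rewrite (cardsD1 y B) yB in leBn.
  by rewrite !inE => /andP[xA /andP[_ xB]] xAF; exists x; rewrite ?inE ?xA.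
have yA : y \notin A.
  apply: contra nsBA => yA; apply/subsetP => z zB.
  by case: (eqVneq z y) => [-> // | zy]; apply: (subsetP sBA); rewrite !inE zy.
exists y; first by rewrite inE yA.
suff -> : y |: A = A :|: B by exact: FU.
apply/eqP; rewrite eqEsubset !subUset sub1set inE yB orbT subsetUl subsetUr /=.
by rewrite -(setD1K yB) setUS.
Qed.

Lemma interior_sub (C : {set T}) : interior F C \subset C.
Proof. by apply/subsetP => p; rewrite inE => /andP[]. Qed.

Lemma interior_subT (C : {set T}) : interior F C \subset interior F [set: T].
Proof.
apply/subsetP => p; rewrite !inE => /andP[_]; apply: (subsetP (cclosureS _)).
exact: setSD.
Qed.

Lemma convexD1_notin_interior (C : {set T}) (x : T) :
  convex F (C :\ x) -> x \notin interior F C.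
Proof. by move=> cCx; rewrite inE cclosure_id // setD11 andbF. Qed.

Lemma cclosure_eq (C D : {set T}) : convex F C ->
  (cclosure F D == C) = (C :\: interior F C \subset D) && (D \subset C).
Proof.
move=> cC; apply/eqP/andP => [<- | [sED sDC]].
  split; last exact: sub_cclosure.
  apply/subsetP => p /setDP[pC pNI]; apply: contraR pNI => pD.
  rewrite inE pC; apply: (subsetP (cclosureS _)) pC.
  apply/subsetP => z zD; rewrite !inE (subsetP (sub_cclosure D)) // andbT.
  by apply: contraNneq pD => <-.
apply/eqP; rewrite eqEsubset cclosure_sub //=; apply: contraT => nsCK.
have [|x] := feasible_augment cC (convex_cclosure D); first by rewrite setCS.
rewrite !inE negbK => /andP[xC xK] xCF.
have xD : x \notin D := contra (subsetP (sub_cclosure D) x) xK.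
have xI : x \in interior F C.
  by apply: contraR xD => xNI; apply: (subsetP sED); apply/setDP.
have cCx : convex F (C :\ x) by rewrite /convex setCD setUC.
by rewrite (negbTE (convexD1_notin_interior cCx)) in xI.
Qed.

Lemma tutte_convexE :
  tutte F = \sum_(C | convex F C) ('X - 1) ^+ #|C| * ('X ^+ #|interior F C|)%:P.
Proof.
have rankT : arank F [set: T] = #|T| by rewrite arankE setCT cclosure0 setC0 cardsT.
rewrite /tutte (reindex_inj (@setC_inj T)) /=.
transitivity (\sum_(D : {set T}) ('X - 1) ^+ #|cclosure F D|
    * (('X - 1) ^+ (#|cclosure F D| - #|D|))%:P : {poly {poly int}}).
  apply: eq_bigr => D _; rewrite rankT !arankE setCK.
  have cardCD := cardsC D; have cardCK := cardsC (cclosure F D).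
  have leDK := subset_leq_card (sub_cclosure D).
  by congr (_ ^+ _ * (_ ^+ _)%:P); lia.
rewrite (partition_big (cclosure F) (convex F)) /=; last by move=> D _; exact: convex_cclosure.
apply: eq_bigr => C cC.
under eq_bigr => D /eqP-> do [].
rewrite -mulr_sumr -rmorph_sum /=.
under eq_bigl => D do rewrite (cclosure_eq _ cC).
by rewrite sum_expr_card_interval ?interior_sub // subrK.
Qed.

Lemma tutte_coef0 (j : nat) :
  tutte_coef F 0 j = \sum_(C | convex F C && (#|interior F C| == j)) (-1) ^+ #|C|.
Proof.
rewrite /tutte_coef tutte_convexE !coef_sum big_mkcondr /=; apply: eq_bigr => C _.
rewrite coefMC -horner_coef0 !hornerE -polyC1 -polyCN -polyC_exp.
by rewrite coefCM coefXn eq_sym; case: eqP; rewrite ?mulr1 ?mulr0.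
Qed.

Lemma sum_convex_interior1 (R : nmodType) (f : {set T} -> R) :
  \sum_(C | convex F C && (#|interior F C| == 1)) f C
  = \sum_(p in interior F [set: T]) \sum_(C | convex F C && (interior F C == [set p])) f C.
Proof.
rewrite (exchange_big_dep (fun C => convex F C && (#|interior F C| == 1))) /=; last first.
  by move=> p C _ /andP[-> /eqP ->]; rewrite cards1.
apply: eq_bigr => C /andP[cC /cards1P[p Ip]].
rewrite (big_pred1 p) // => q /=; rewrite Ip cC /=.
apply/andP/eqP => [[_ /eqP/set1_inj] // | ->]; split=> //.
by apply: (subsetP (interior_subT C)); rewrite Ip set11.
Qed.
End Antimatroid.

Theorem corollary4p5 (T : finType) (F : {set {set T}}) :
  is_antimatroid F ->
  let a1 := fun i : nat =>
    #|[set C : {set T} | convex F C & (#|C| == i) && (#|interior F C| == 1)%N]| in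
  tutte_coef F 0 1 = \sum_(0 <= i < #|T|.+1) (-1 : int) ^+ i * (a1 i)%:R
  /\ \sum_(0 <= i < #|T|.+1) (-1 : int) ^+ i * (a1 i)%:R
     = \sum_(p in interior F [set: T])
         \sum_(C : {set T} | convex F C && (interior F C == [set p])) (-1 : int) ^+ #|C|.
Proof.
move=> antiF a1.
set K := [set C : {set T} | convex F C & #|interior F C| == 1%N].
have alt_sum : \sum_(0 <= i < #|T|.+1) (-1 : int) ^+ i * (a1 i)%:R
    = \sum_(C in K) (-1) ^+ #|C|.
  rewrite (@sum_expr_card_by_size _ _ _ _ #|T|); last by move=> C _; exact: max_card.
  apply: eq_bigr => i _; congr (_ * _%:R); apply: eq_card => C.
  by rewrite !inE andbA andbAC.
split; first by rewrite alt_sum (tutte_coef0 antiF); apply: eq_bigl => C; rewrite inE.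
by rewrite alt_sum -(sum_convex_interior1 antiF); apply: eq_bigl => C; rewrite inE.
Qed.
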